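(* For all $L>0$ there exists $C>0$ such that for all $J\ge2$, all $\delta t>0$ with $\delta t/\delta x^2\le1/2$, and all $n\ge1$, $$\sum_{\ell=1}^{J-1}\Big|\delta t\sum_{k=0}^{n-1}(1+\delta t\,\lambda_\ell)^k\Big|^2\le C.$$
   Context: $\delta x=L/(J-1)$, $\lambda_\ell=-\frac4{\delta x^2}\sin^2\big(\frac{\ell\pi}{2J}\big)$ for $0\le\ell\le J-1$. *)

From Stdlib Require Import Reals.
Open Scope R_scope.

Definition dx (L : R) (J : nat) : R := L / (INR J - 1).

Definition lam (L : R) (J l : nat) : R :=
  - (4 / (dx L J) ^ 2) * (sin (INR l * PI / (2 * INR J))) ^ 2.

Fixpoint sum_range (f : nat -> R) (n : nat) : R :=
  match n with
  | O => 0
  | S n' => sum_range f n' + f n'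
  end.

(** The symbol [1 + dt lam_l] is [q = 1 - 4 r sin^2 x_l] with [r = dt/dx^2 <= 1/2],
    so [|q| <= 1] and the geometric sum gives
    [|dt sum_k q^k| <= 2 dt / (1 - q) = dx^2 / (2 sin^2 x_l)].
    Since [sin x_l >= l / (2J)] and [J dx <= 2L], the [l]-th mode is at most
    [8 L^2 / l^2]; its square is dominated by the telescoping [128 L^4 (1/l - 1/(l+1))],
    whose sum over [l] is at most [128 L^4], independently of [J], [dt] and [n]. *)

From Stdlib Require Import Reals Lra Lia.
Open Scope R_scope.

Lemma sum_range_le (f g : nat -> R) (n : nat) :
  (forall k, (k < n)%nat -> f k <= g k) -> sum_range f n <= sum_range g n.
Proof.
  induction n as [|n IH]; simpl; intros Hfg; [lra|].
  apply Rplus_le_compat; [apply IH; intros; apply Hfg|apply Hfg]; lia.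
Qed.

Lemma sum_range_telescope (f : nat -> R) (n : nat) :
  sum_range (fun k => f k - f (S k)) n = f O - f n.
Proof. induction n as [|n IH]; simpl; [ring|rewrite IH; ring]. Qed.

Lemma sum_range_geom (q : R) (n : nat) :
  sum_range (fun k => q ^ k) n * (1 - q) = 1 - q ^ n.
Proof.
  induction n as [|n IH]; simpl; [ring|].
  rewrite Rmult_plus_distr_r, IH; ring.
Qed.

Lemma Rabs_sum_range_geom_le (q : R) (n : nat) :
  Rabs q <= 1 -> q < 1 -> Rabs (sum_range (fun k => q ^ k) n) <= 2 / (1 - q).
Proof.
  intros Hq1 Hlt.
  assert (Hqn : Rabs (1 - q ^ n) <= 2).
  { eapply Rle_trans; [apply Rabs_triang|].
    rewrite Rabs_Ropp, Rabs_R1, <- RPow_abs.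
    enough (Rabs q ^ n <= 1) by lra.
    rewrite <- (pow1 n); apply pow_incr; split; [apply Rabs_pos|exact Hq1]. }
  apply (Rmult_le_reg_r (1 - q)); [lra|].
  unfold Rdiv; rewrite Rmult_assoc, Rinv_l, Rmult_1_r by lra.
  rewrite <- (Rabs_right (1 - q)) at 1 by lra.
  rewrite <- Rabs_mult, sum_range_geom; exact Hqn.
Qed.

(* The Taylor lower bound of [sin_bound] is [>= x - x^3/6 >= x/3] on [0, 2]. *)
Lemma sin_ge_div3 (x : R) : 0 <= x -> x <= 2 -> x / 3 <= sin x.
Proof.
  intros Hx0 Hx2.
  assert (HPI := PI2_3_2).
  destruct (sin_bound x 0 Hx0 ltac:(lra)) as [Hlb _].
  unfold sin_approx, sin_term in Hlb; simpl in Hlb.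
  eapply Rle_trans; [|exact Hlb].
  field_simplify; nra.
Qed.

Lemma sin_eigen_ge (J l : nat) : (1 <= l)%nat -> (l <= J)%nat ->
  INR l / (2 * INR J) <= sin (INR l * PI / (2 * INR J)).
Proof.
  intros Hl HlJ.
  assert (HPI := PI2_3_2). assert (HPI4 := PI_4).
  assert (Hm : 1 <= INR l) by (apply (le_INR 1); lia).
  assert (Hmj : INR l <= INR J) by (apply le_INR; exact HlJ).
  set (t := INR l / INR J).
  assert (Htj : t * INR J = INR l) by (unfold t; field; lra).
  assert (Hx : INR l * PI / (2 * INR J) = t * (PI / 2)) by (unfold t; field; lra).
  assert (Ht : 0 <= t <= 1) by (split; nra).
  rewrite Hx.
  eapply Rle_trans; [|apply sin_ge_div3; nra].
  replace (INR l / (2 * INR J)) with (t / 2) by (unfold t; field; lra).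
  nra.
Qed.

Lemma dx_pos (L : R) (J : nat) : 0 < L -> (2 <= J)%nat -> 0 < dx L J.
Proof.
  intros HL HJ; unfold dx.
  assert (HJ2 : 2 <= INR J) by (apply (le_INR 2); lia).
  apply Rdiv_lt_0_compat; lra.
Qed.

Lemma dx_mul_INR_le (L : R) (J : nat) : 0 < L -> (2 <= J)%nat ->
  dx L J * INR J <= 2 * L.
Proof.
  intros HL HJ; unfold dx.
  assert (HJ2 : 2 <= INR J) by (apply (le_INR 2); lia).
  apply (Rmult_le_reg_r (INR J - 1)); [lra|].
  replace (L / (INR J - 1) * INR J * (INR J - 1)) with (L * INR J) by (field; lra).
  nra.
Qed.

Lemma one_plus_mul_lam (L dt : R) (J l : nat) :
  1 + dt * lam L J l
  = 1 - 4 * (dt / dx L J ^ 2) * sin (INR l * PI / (2 * INR J)) ^ 2.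
Proof. unfold lam, Rdiv; ring. Qed.

Lemma mode_le (L dt : R) (J l n : nat) :
  0 < L -> (2 <= J)%nat -> 0 < dt -> dt / dx L J ^ 2 <= 1 / 2 ->
  (1 <= l)%nat -> (l < J)%nat ->
  Rabs (dt * sum_range (fun k => (1 + dt * lam L J l) ^ k) n)
  <= 8 * L ^ 2 / INR l ^ 2.
Proof.
  intros HL HJ Hdt Hr Hl HlJ.
  rewrite one_plus_mul_lam.
  pose proof (dx_pos L J HL HJ) as Hd.
  pose proof (dx_mul_INR_le L J HL HJ) as HdJ.
  pose proof (sin_eigen_ge J l Hl ltac:(lia)) as Hs.
  set (d := dx L J) in *; set (s := sin _) in *; set (r := dt / d ^ 2) in *.
  assert (Hm : 1 <= INR l) by (apply (le_INR 1); lia).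
  assert (Hmj : INR l <= INR J) by (apply le_INR; lia).
  assert (Hs_lb : INR l <= 2 * INR J * s).
  { replace (INR l) with (2 * INR J * (INR l / (2 * INR J))) at 1 by (field; lra).
    apply Rmult_le_compat_l; lra. }
  assert (Hs2 : s ^ 2 <= 1).
  { pose proof (SIN_bound (INR l * PI / (2 * INR J))) as Hsin; fold s in Hsin; nra. }
  assert (Hs_pos : 0 < s).
  { apply Rlt_le_trans with (INR l / (2 * INR J)); [|exact Hs].
    apply Rdiv_lt_0_compat; lra. }
  assert (Hs0 : 0 < s ^ 2) by (apply pow_lt; exact Hs_pos).
  assert (Hr0 : 0 < r) by (apply Rdiv_lt_0_compat; [lra|apply pow_lt; lra]).
  assert (Hgeom : Rabs (sum_range (fun k => (1 - 4 * r * s ^ 2) ^ k) n) <= 2 / (4 * r * s ^ 2)).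
  { pose proof (Rabs_sum_range_geom_le (1 - 4 * r * s ^ 2) n) as Hg.
    replace (1 - (1 - 4 * r * s ^ 2)) with (4 * r * s ^ 2) in Hg by ring.
    assert (0 < 4 * r * s ^ 2 <= 2) by (split; nra).
    apply Hg; [apply Rabs_le|]; lra. }
  rewrite Rabs_mult, (Rabs_right dt) by lra.
  eapply Rle_trans; [apply Rmult_le_compat_l; [lra|exact Hgeom]|].
  replace (dt * (2 / (4 * r * s ^ 2))) with (d ^ 2 / (2 * s ^ 2))
    by (unfold r; field; lra).
  apply (Rmult_le_reg_r (2 * s ^ 2 * INR l ^ 2));
    [apply Rmult_lt_0_compat; [lra|apply pow_lt; lra]|].
  replace (d ^ 2 / (2 * s ^ 2) * (2 * s ^ 2 * INR l ^ 2)) with ((d * INR l) ^ 2) by (field; lra).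
  replace (8 * L ^ 2 / INR l ^ 2 * (2 * s ^ 2 * INR l ^ 2)) with ((4 * L * s) ^ 2) by (field; lra).
  apply pow_incr; split; [nra|].
  apply Rle_trans with (d * (2 * INR J * s)); [apply Rmult_le_compat_l; lra|nra].
Qed.

Lemma inv_pow4_le_telescope (x : R) : 1 <= x -> / x ^ 4 <= 2 * (/ x - / (x + 1)).
Proof.
  intros Hx.
  replace (2 * (/ x - / (x + 1))) with (2 / (x * (x + 1))) by (field; lra).
  apply (Rmult_le_reg_r (x ^ 4 * (x * (x + 1))));
    [apply Rmult_lt_0_compat; [apply pow_lt|]; nra|].
  replace (/ x ^ 4 * (x ^ 4 * (x * (x + 1)))) with (x * (x + 1)) by (field; lra).
  replace (2 / (x * (x + 1)) * (x ^ 4 * (x * (x + 1)))) with (2 * x ^ 4) by (field; lra).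
  assert (1 <= x ^ 2) by nra.
  assert (x ^ 2 <= x ^ 4) by (replace (x ^ 4) with (x ^ 2 * x ^ 2) by ring; nra).
  nra.
Qed.

Lemma mode_sq_le_telescope (L dt : R) (J l n : nat) :
  0 < L -> (2 <= J)%nat -> 0 < dt -> dt / dx L J ^ 2 <= 1 / 2 ->
  (1 <= l)%nat -> (l < J)%nat ->
  Rabs (dt * sum_range (fun k => (1 + dt * lam L J l) ^ k) n) ^ 2
  <= 128 * L ^ 4 / INR l - 128 * L ^ 4 / INR (S l).
Proof.
  intros HL HJ Hdt Hr Hl HlJ.
  assert (Hm : 1 <= INR l) by (apply (le_INR 1); lia).
  eapply Rle_trans.
  { apply pow_incr; split; [apply Rabs_pos|exact (mode_le L dt J l n HL HJ Hdt Hr Hl HlJ)]. }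
  pose proof (inv_pow4_le_telescope (INR l) Hm) as Htel.
  assert (HL4 : 0 < L ^ 4) by (apply pow_lt; lra).
  rewrite S_INR.
  replace ((8 * L ^ 2 / INR l ^ 2) ^ 2) with (64 * L ^ 4 * / INR l ^ 4) by (field; lra).
  unfold Rdiv; nra.
Qed.

Theorem proposition3p4 :
  forall L : R, 0 < L ->
  exists C : R, 0 < C /\
    forall (J : nat) (dt : R) (n : nat),
      (2 <= J)%nat -> 0 < dt -> dt / (dx L J) ^ 2 <= 1 / 2 -> (1 <= n)%nat ->
      sum_range (fun l =>
          if (1 <=? l)%nat then
            (Rabs (dt * sum_range (fun k => (1 + dt * lam L J l) ^ k) n)) ^ 2
          else 0) J
      <= C.
Proof.
  intros L HL.
  assert (HC : 0 < 128 * L ^ 4) by (pose proof (pow_lt L 4 HL); lra).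
  exists (128 * L ^ 4); split; [exact HC|].
  intros J dt n HJ Hdt Hr _.
  (* [max 1 l] makes the [l = 0] increment vanish, like the excluded mode. *)
  set (f l := 128 * L ^ 4 / INR (Nat.max 1 l)).
  eapply Rle_trans with (sum_range (fun l => f l - f (S l)) J).
  - apply sum_range_le; intros l HlJ.
    destruct l as [|l]; simpl Nat.leb; cbv iota.
    + unfold f; simpl; lra.
    + unfold f; rewrite !Nat.max_r by lia.
      apply mode_sq_le_telescope; auto; lia.
  - rewrite sum_range_telescope.
    assert (HfJ : 0 < f J)
      by (unfold f; apply Rdiv_lt_0_compat; [exact HC|apply lt_0_INR; lia]).
    unfold f at 1; simpl; lra.
Qed.
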